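(* For integers $j,k,n\ge 0$ let $$a_n(j,k)=\binom{n}{j}^2\binom{n}{k}^2\binom{n+j}{n}\binom{n+k}{n}\binom{j+k}{n}.$$ Then for all integers $n\ge 1$ and $j,k\ge 0$: (a) $v_2\big(a_n(j,k)\big)=1$ if and only if $\{j,k\}=\{0,n\}$ and $n$ is a power of $2$; (b) $v_2\big(a_n(j,k)\big)\ge 2$ otherwise.
   Context: $v_2$ denotes the $2$-adic valuation on the integers, with the convention $v_2(0)=+\infty$. Binomial coefficients $\binom{a}{b}$ with $b>a\ge 0$ are $0$. ''Power of $2$'' means $2^m$ for some integer $m\ge 0$ (so $n=1$ is included). *)

From mathcomp Require Import all_boot.
Set Implicit Arguments. Unset Strict Implicit. Unset Printing Implicit Defensive.

(* 2-adic valuation with values in N ∪ {+oo}: None stands for +oo (v2 0). *)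
Definition v2 (a : nat) : option nat :=
  if a == 0 then None else Some (logn 2 a).

Definition v2_ge (a m : nat) : Prop :=
  match v2 a with None => True | Some v => m <= v end.

Definition a_n (n j k : nat) : nat :=
  'C(n, j) ^ 2 * 'C(n, k) ^ 2 * 'C(n + j, n) * 'C(n + k, n) * 'C(j + k, n).

Definition is_pow2 (n : nat) : Prop := exists m, n = 2 ^ m.

From mathcomp Require Import all_boot zify.
Set Implicit Arguments. Unset Strict Implicit. Unset Printing Implicit Defensive.

(* At the corners (j, k) = (0, n), (n, 0) the product collapses to the central
   binomial 'C(2n, n). Writing c(n) for its 2-adic valuation, the identity
   (n+1) 'C(2n+2, n+1) = 2 (2n+1) 'C(2n, n) gives c(2m) = c(m) and
   c(2m+1) = c(m) + 1, so c(n) counts the binary digits 1 of n: it is at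
   least 1, with equality exactly for powers of 2. Off the corners a_n is
   either 0 or has two even factors, because for 0 < j <= n
   'C(n, j) 'C(n + j, n) = 'C(n + j, 2j) 'C(2j, j) and 'C(2j, j) is even. *)

Lemma mul_bin_sub m k i : i <= k <= m ->
  'C(m, k) * 'C(k, i) = 'C(m, i) * 'C(m - i, k - i).
Proof.
case/andP=> le_ik le_km.
have pos : 0 < i`! * (k - i)`! * (m - k)`! by rewrite !muln_gt0 !fact_gt0.
apply/eqP; rewrite -(eqn_pmul2r pos); apply/eqP.
have mk := bin_fact le_km; have ki := bin_fact le_ik.
have mi := bin_fact (leq_trans le_ik le_km).
have := bin_fact (leq_sub2r i le_km).
rewrite (_ : m - i - (k - i) = m - k); last by lia.
move=> mi_ki.
transitivity m`!; first by rewrite -mk -ki; lia.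
by rewrite -mi -mi_ki; lia.
Qed.

Lemma mul_bin_add n j : j <= n ->
  'C(n, j) * 'C(n + j, n) = 'C(n + j, j.*2) * 'C(j.*2, j).
Proof.
move=> le_jn.
have := @mul_bin_sub (n + j) n (n - j); rewrite leq_subr leq_addr => /(_ isT).
have sym : 'C(n + j, n - j) = 'C(n + j, j.*2).
  by rewrite -bin_sub; [congr 'C(_, _) | ]; lia.
have e1 : n + j - (n - j) = j.*2 by lia.
have e2 : n - (n - j) = j by lia.
by rewrite bin_sub // sym e1 e2 mulnC.
Qed.

Lemma bin_odd_mid m : 'C(m.*2.+1, m.+1) = 'C(m.*2.+1, m).
Proof.
rewrite -bin_sub; last by lia.
by congr 'C(_, _); lia.
Qed.

Lemma bin_central_succ m : 'C(m.+1.*2, m.+1) = 2 * 'C(m.*2.+1, m).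
Proof. by rewrite doubleS binS bin_odd_mid addnn mul2n. Qed.

Lemma dvd2_bin_central n : 0 < n -> 2 %| 'C(n.*2, n).
Proof. by case: n => // m _; rewrite bin_central_succ dvdn_mulr. Qed.

Lemma logn2_odd m : logn 2 m.*2.+1 = 0.
Proof. by rewrite logn_coprime // coprime2n /= odd_double. Qed.

Lemma logn2_bin_central_succ m :
  logn 2 'C(m.+1.*2, m.+1) + logn 2 m.+1 = (logn 2 'C(m.*2, m)).+1.
Proof.
have mid : m.+1 * 'C(m.*2.+1, m) = m.*2.+1 * 'C(m.*2, m).
  by rewrite -bin_odd_mid -mul_bin_diag.
have key : 'C(m.+1.*2, m.+1) * m.+1 = 2 * (m.*2.+1 * 'C(m.*2, m)).
  by rewrite bin_central_succ -mid mulnAC mulnA.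
move/(congr1 (logn 2)): key.
rewrite !lognM ?muln_gt0 ?bin_gt0 ?leq_addr //; try lia.
by rewrite logn2_odd (@logn_prime 2 2 isT).
Qed.

Lemma logn2_double m : 0 < m -> logn 2 m.*2 = (logn 2 m).+1.
Proof. by move=> m_gt0; rewrite -mul2n lognM // (@logn_prime 2 2 isT). Qed.

Lemma logn2_bin_central_odd m :
  logn 2 'C(m.*2.+1.*2, m.*2.+1) = (logn 2 'C(m.*2.*2, m.*2)).+1.
Proof.
have := logn2_bin_central_succ m.*2.
by rewrite logn2_odd addn0.
Qed.

Lemma logn2_bin_central_double m :
  logn 2 'C(m.*2.*2, m.*2) = logn 2 'C(m.*2, m).
Proof.
elim: m => [//|m IHm].
have := logn2_bin_central_succ m.*2.+1.
rewrite logn2_bin_central_odd IHm -doubleS logn2_double //.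
have := logn2_bin_central_succ m; lia.
Qed.

Lemma is_pow2_double m : is_pow2 m.*2 <-> is_pow2 m.
Proof.
split=> [[[|e] def_m]|[e ->]]; last by exists e.+1; rewrite expnS mul2n.
- by move/(congr1 odd): def_m; rewrite odd_double.
- by exists e; apply/double_inj; rewrite def_m expnS mul2n.
Qed.

Lemma is_pow2_odd m : is_pow2 m.*2.+1 <-> m = 0.
Proof.
split=> [[[|e] def_m]|->]; last by exists 0.
- by move: def_m; rewrite expn0 => -[/eqP]; rewrite double_eq0 => /eqP.
- by move/(congr1 odd): def_m; rewrite /= odd_double oddX.
Qed.

Lemma logn2_bin_central_gt0 n : 0 < n -> 0 < logn 2 'C(n.*2, n).
Proof.
move=> n_gt0; have := dvd2_bin_central n_gt0.
by rewrite -{1}(expn1 2) pfactor_dvdn // bin_gt0 -addnn leq_addr.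
Qed.

Lemma logn2_bin_central_eq1 n : 0 < n ->
  logn 2 'C(n.*2, n) = 1 <-> is_pow2 n.
Proof.
elim/ltn_ind: n => n IHn n_gt0.
have lt_half_n : n./2 < n by rewrite ltn_half_double -addnn; lia.
rewrite -(odd_double_half n) in n_gt0 *.
case: (odd n) n_gt0 => /= [_|]; set m := n./2.
- rewrite logn2_bin_central_odd logn2_bin_central_double is_pow2_odd.
  have [->|m_gt0] := posnP m; first by [].
  by have := logn2_bin_central_gt0 m_gt0; split; lia.
- rewrite add0n double_gt0 => m_gt0.
  by rewrite logn2_bin_central_double is_pow2_double; apply: IHn.
Qed.

Definition corner (n j k : nat) : Prop := (j = 0 /\ k = n) \/ (j = n /\ k = 0).

Lemma a_n_corner n j k : corner n j k -> a_n n j k = 'C(n.*2, n).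
Proof.
rewrite /a_n -addnn.
by case=> -[-> ->]; rewrite ?bin0 ?binn ?addn0 ?add0n ?binn !(mul1n, muln1).
Qed.

Lemma dvd2_bin_mul_bin_add n j : 0 < j -> j <= n -> 2 %| 'C(n, j) * 'C(n + j, n).
Proof. by move=> j_gt0 le_jn; rewrite mul_bin_add // dvdn_mull ?dvd2_bin_central. Qed.

Lemma dvd4_a_n n j k : 0 < n -> ~ corner n j k -> 4 %| a_n n j k.
Proof.
move=> n_gt0 not_corner; rewrite /a_n.
have [lt_nj|le_jn] := ltnP n j; first by rewrite bin_small.
have [lt_nk|le_kn] := ltnP n k; first by rewrite (bin_small lt_nk) !(mul0n, muln0).
have [j0|j_gt0] := posnP j.
  have lt_kn : k < n by move: not_corner; rewrite /corner; lia.
  by rewrite j0 add0n (bin_small lt_kn) muln0.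
have [k0|k_gt0] := posnP k.
  have lt_jn : j < n by move: not_corner; rewrite /corner; lia.
  by rewrite k0 !addn0 (bin_small lt_jn) muln0.
rewrite (_ : _ * _ = ('C(n, j) * 'C(n + j, n)) * ('C(n, k) * 'C(n + k, n))
                   * ('C(n, j) * 'C(n, k) * 'C(j + k, n))); last by lia.
by rewrite dvdn_mulr // (_ : 4 = 2 * 2) // dvdn_mul // dvd2_bin_mul_bin_add.
Qed.

Theorem mainTheorem1 (n j k : nat) : 1 <= n ->
  (v2 (a_n n j k) = Some 1 <->
     (((j = 0 /\ k = n) \/ (j = n /\ k = 0)) /\ is_pow2 n))
  /\
  (~ (((j = 0 /\ k = n) \/ (j = n /\ k = 0)) /\ is_pow2 n) ->
     v2_ge (a_n n j k) 2).
Proof.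
move=> n_gt0; rewrite /v2_ge /v2 -/(corner n j k).
have [at_corner|off_corner] : corner n j k \/ ~ corner n j k.
  by rewrite /corner; lia.
- have C_gt0 : 0 < 'C(n.*2, n) by rewrite bin_gt0 -addnn leq_addr.
  rewrite a_n_corner // eqn0Ngt C_gt0 /=.
  have [v_gt0 v_eq1] := (logn2_bin_central_gt0 n_gt0, logn2_bin_central_eq1 n_gt0).
  split=> [|not_pow2]; first by split=> [[/v_eq1]|[_ /v_eq1 ->]].
  suff : logn 2 'C(n.*2, n) <> 1 by lia.
  by move/v_eq1=> pow2; apply: not_pow2.
- have := dvd4_a_n n_gt0 off_corner.
  case: eqP => [_ _ | /eqP a_neq0]; first by split=> //; split=> // -[].
  rewrite (_ : 4 = 2 ^ 2) // pfactor_dvdn ?lt0n // => v_ge2.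
  by split=> //; split=> [[v_eq1]|[]] //; rewrite v_eq1 in v_ge2.
Qed.
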